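(* The classes of coherent weakly Hausdorff spaces and of compact coherent weakly Hausdorff spaces are not $\omega$-projective. Moreover, there is an ep-system $(p_{mn}\colon X_n\to X_m)_{m\le n\in\mathbb N}$ of compact coherent weakly Hausdorff spaces whose projective limit in the category of topological spaces is not weakly Hausdorff.
   Context: A projective system of topological spaces consists of a directed preordered set $(I,\sqsubseteq)$, spaces $X_i$ and continuous maps $p_{ij}\colon X_j\to X_i$ for $i\sqsubseteq j$ with $p_{ii}=\mathrm{id}$ and $p_{ij}\circ p_{jk}=p_{ik}$; its projective limit is its limit in the category of topological spaces. A class is $\omega$-projective if it is closed under projective limits of systems whose index set has a countable cofinal subset. The specialization preorder is $x\le y$ iff every open neighbourhood of $x$ contains $y$; $\uparrow x$ is the set of points above $x$; saturated means upward closed. A space is coherent if the intersection of any two compact saturated subsets is compact (no separation axiom in compactness). A space is weakly Hausdorff if for any two points $x,y$ and every open neighbourhood $W$ of $\uparrow x\cap\uparrow y$ there are open neighbourhoods $U$ of $x$ and $V$ of $y$ with $U\cap V\subseteq W$. A continuous map $p\colon Y\to X$ is a projection if there is a continuous $e\colon X\to Y$ with $p\circ e=\mathrm{id}_X$ and $e\circ p\le\mathrm{id}_Y$ pointwise in the specialization preorder of $Y$; an ep-system is a projective system whose bonding maps are projections. *)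

From HB Require Import structures.
From mathcomp Require Import all_boot all_order.
From mathcomp Require Import all_classical.
From mathcomp Require Import topology.
Set Implicit Arguments. Unset Strict Implicit. Unset Printing Implicit Defensive.
Local Open Scope classical_set_scope.

Definition spec_le (T : topologicalType) (x y : T) : Prop :=
  forall U : set T, open U -> U x -> U y.

Definition upset (T : topologicalType) (x : T) : set T := [set y | spec_le x y].

Definition saturated (T : topologicalType) (A : set T) : Prop :=
  forall x y, A x -> spec_le x y -> A y.

Definition coherent (T : topologicalType) : Prop :=
  forall A B : set T, compact A -> saturated A -> compact B -> saturated B ->
    compact (A `&` B).

Definition weakly_hausdorff (T : topologicalType) : Prop :=
  forall (x y : T) (W : set T), open W -> upset x `&` upset y `<=` W ->
    exists U V : set T, [/\ open U, U x, open V, V y & U `&` V `<=` W].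

Definition compact_space (T : topologicalType) : Prop := compact [set: T].

Definition directed_preorder (I : Type) (le : I -> I -> Prop) : Prop :=
  [/\ (forall i, le i i),
      (forall i j k, le i j -> le j k -> le i k),
      (exists i : I, True) &
      (forall i j, exists k, le i k /\ le j k)].

(* Projective system: bonding maps p i j : X j -> X i, constrained for i <= j *)
Definition is_proj_system (I : Type) (le : I -> I -> Prop)
    (X : I -> topologicalType) (p : forall i j, X j -> X i) : Prop :=
  [/\ directed_preorder le,
      (forall i j, le i j -> continuous (p i j)),
      (forall i (x : X i), p i i x = x) &
      (forall i j k, le i j -> le j k -> forall x : X k,
          p i j (p j k x) = p i k x)].

Definition is_cone (I : Type) (le : I -> I -> Prop)
    (X : I -> topologicalType) (p : forall i j, X j -> X i)
    (L : topologicalType) (q : forall i, L -> X i) : Prop :=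
  (forall i, continuous (q i)) /\
  (forall i j, le i j -> forall x : L, p i j (q j x) = q i x).

Definition is_proj_limit (I : Type) (le : I -> I -> Prop)
    (X : I -> topologicalType) (p : forall i j, X j -> X i)
    (L : topologicalType) (q : forall i, L -> X i) : Prop :=
  is_cone le p q /\
  forall (M : topologicalType) (r : forall i, M -> X i), is_cone le p r ->
    exists u : M -> L,
      [/\ continuous u, (forall i (x : M), q i (u x) = r i x) &
          (forall u' : M -> L, continuous u' ->
             (forall i (x : M), q i (u' x) = r i x) -> forall x, u' x = u x)].

Definition countable_cofinal (I : Type) (le : I -> I -> Prop) : Prop :=
  exists C : set I, countable C /\ forall i, exists j, C j /\ le i j.

Definition omega_projective (P : topologicalType -> Prop) : Prop :=
  forall (I : Type) (le : I -> I -> Prop) (X : I -> topologicalType)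
         (p : forall i j, X j -> X i),
    is_proj_system le p -> countable_cofinal le -> (forall i, P (X i)) ->
    forall (L : topologicalType) (q : forall i, L -> X i),
      is_proj_limit le p q -> P L.

Definition is_projection (Y X : topologicalType) (p : Y -> X) : Prop :=
  continuous p /\
  exists e : X -> Y, [/\ continuous e, (forall x, p (e x) = x) &
                         (forall y, spec_le (e (p y)) y)].

Definition is_ep_system (I : Type) (le : I -> I -> Prop)
    (X : I -> topologicalType) (p : forall i j, X j -> X i) : Prop :=
  is_proj_system le p /\ forall i j, le i j -> is_projection (p i j).

Definition coherent_wH (T : topologicalType) : Prop :=
  coherent T /\ weakly_hausdorff T.

Definition compact_coherent_wH (T : topologicalType) : Prop :=
  compact_space T /\ coherent T /\ weakly_hausdorff T.

From HB Require Import structures.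
From mathcomp Require Import all_boot all_order all_classical topology.
From mathcomp Require Import zify.
Set Implicit Arguments. Unset Strict Implicit. Unset Printing Implicit Defensive.
Local Open Scope classical_set_scope.

(* Each X_n is a countable poset with the Alexandrov topology of up-sets,
   ordered so that every subset is generated by finitely many of its points:
   every subset of X_n is then compact, so coherence is automatic, and the
   up-sets of points are open, which gives the weak Hausdorff property.
   The point a and the chain b_0 <= b_1 <= ... have the common upper bounds
   s_k, but at level n only b_0, ..., b_n lie below the s_k.  In the limit the
   constant thread a and the thread (b_n)_n therefore have no common upper
   bound, while any two of their basic neighbourhoods, fixed at some level n,
   meet in the constant thread s_n. *)

Definition upper_closed (T : Type) (r : T -> T -> Prop) (A : set T) : Prop :=
  forall x y, r x y -> A x -> A y.

Definition alexandrov (T : Type) (r : T -> T -> Prop) : Type := T.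

Section AlexandrovTopology.
Variables (T : choiceType) (r : T -> T -> Prop).

Lemma upper_closedT : upper_closed r setT. Proof. by []. Qed.

Lemma upper_closedI : setI_closed (upper_closed r).
Proof. by move=> A B oA oB x y xy [/(oA _ _ xy) ? /(oB _ _ xy)]. Qed.

Lemma upper_closed_bigcup (I : Type) (F : I -> set T) :
  (forall i, upper_closed r (F i)) -> upper_closed r (\bigcup_i F i).
Proof. by move=> oF x y xy [i _ /(oF i _ _ xy) Fy]; exists i. Qed.

HB.instance Definition _ := Choice.on (alexandrov r).
HB.instance Definition _ := isOpenTopological.Build (alexandrov r)
  upper_closedT upper_closedI upper_closed_bigcup.

Lemma open_alexandrov (A : set (alexandrov r)) : open A <-> upper_closed r A.
Proof. by []. Qed.

Hypotheses (r_refl : forall x, r x x)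
  (r_trans : forall x y z, r x y -> r y z -> r x z).

Lemma open_up (x : alexandrov r) : open (r x : set (alexandrov r)).
Proof. by move=> y z yz xy; exact: r_trans xy yz. Qed.

Lemma spec_le_alexandrov (x y : alexandrov r) : spec_le x y <-> r x y.
Proof.
split=> [|xy U oU]; first by apply; [exact: open_up | exact: r_refl].
exact: oU.
Qed.

Lemma alexandrov_weakly_hausdorff : weakly_hausdorff (alexandrov r).
Proof.
move=> x y W _ xyW; exists (r x), (r y).
split; [exact: open_up | exact: r_refl | exact: open_up | exact: r_refl |].
by move=> z [xz yz]; apply: xyW; split; apply/spec_le_alexandrov.
Qed.

End AlexandrovTopology.

Lemma monotone_continuous (T T' : choiceType) (r : T -> T -> Prop)
    (r' : T' -> T' -> Prop) (f : alexandrov r -> alexandrov r') :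
  (forall x y, r x y -> r' (f x) (f y)) -> continuous f.
Proof.
move=> mf; apply/continuousP => A /open_alexandrov oA.
by apply/open_alexandrov => x y /mf; exact: oA.
Qed.

Section FinitelyGenerated.
Variables (T : eqType) (r : T -> T -> Prop).

Definition finitely_generated (A : set T) : Prop :=
  exists2 G : seq T, (forall g, g \in G -> A g) &
    forall x, A x -> exists2 g, g \in G & r g x.

Definition finitely_generated_subsets (P : set T) : Prop :=
  forall A, A `<=` P -> finitely_generated A.

Lemma finitely_generatedU (A B : set T) :
  finitely_generated A -> finitely_generated B -> finitely_generated (A `|` B).
Proof.
move=> [G GA AG] [H HB BH]; exists (G ++ H) => [g|x].
  by rewrite mem_cat => /orP[/GA|/HB]; [left|right].
by case=> [/AG|/BH] [g gin gx]; exists g; rewrite // mem_cat gin ?orbT.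
Qed.

Lemma finitely_generated_subsetsU (P Q : set T) :
  finitely_generated_subsets P -> finitely_generated_subsets Q ->
  finitely_generated_subsets (P `|` Q).
Proof.
move=> fgP fgQ A AP; rewrite -(setIidl AP) setIUr.
by apply: finitely_generatedU; [apply: fgP | apply: fgQ]; exact: subIsetr.
Qed.

Lemma finitely_generated_subsets_chain (f : nat -> T) :
  (forall i j, (i <= j)%N -> r (f i) (f j)) ->
  finitely_generated_subsets (range f).
Proof.
move=> f_mono A Af.
have [[i Ai]|noA] := pselect (exists i, A (f i)); last first.
  by exists [::] => // x /[dup] /Af [i _ <-] Ai; exfalso; apply: noA; exists i.
have exA : exists i, `[< A (f i) >] by exists i; exact/asboolP.
case: (ex_minnP exA) => i0 /asboolP Ai0 i0_min.
exists [:: f i0] => [g|x Ax]; first by rewrite inE => /eqP->.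
have [j _ fj] := Af x Ax; exists (f i0); first exact: mem_head.
by rewrite -fj; apply/f_mono/i0_min/asboolP; rewrite fj.
Qed.

End FinitelyGenerated.

Lemma upset_nbhs (T : topologicalType) (x : T) (N : set T) :
  nbhs x N -> upset x `<=` N.
Proof. by rewrite nbhsE => -[O [oO Ox] ON] y /(_ O oO Ox) /ON. Qed.

Lemma finitely_generated_compact (T : topologicalType) (A : set T) :
  finitely_generated (@spec_le T) A -> compact A.
Proof.
move=> [G GA AG] F PF FA; apply: contrapT => noclus.
have avoid g : g \in G -> exists2 B, F B & forall w, B w -> ~ spec_le g w.
  move=> /GA Ag; have : ~ cluster F g by move=> Fg; apply: noclus; exists g.
  move=> /existsNP[B /existsNP[N /not_implyP[FB /not_implyP[gN BN]]]].
  exists B => // w Bw gw; apply: BN; exists w; split => //.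
  exact: upset_nbhs gN _ gw.
have [B FB BG] : exists2 B, F B & forall g w, g \in G -> B w -> ~ spec_le g w.
  elim: G {GA AG} avoid => [|g G IH] avoid.
    by exists setT => //; exact: filterT.
  have [B FB BG] : exists2 B, F B & forall h w, h \in G -> B w -> ~ spec_le h w.
    by apply: IH => h hG; apply: avoid; rewrite in_cons hG orbT.
  have [B' FB' B'g] := avoid g (mem_head g G).
  exists (B `&` B') => [|h w]; first exact: filterI.
  by rewrite in_cons => /orP[/eqP->|hG] [Bw B'w]; [exact: B'g | exact: BG].
have [w [Bw Aw]] := filter_ex (filterI FB FA).
have [g gG gw] := AG w Aw.
exact: BG gG Bw gw.
Qed.

Lemma alexandrov_compact_coherent_wH (T : choiceType) (r : T -> T -> Prop) :
  (forall x, r x x) -> (forall x y z, r x y -> r y z -> r x z) ->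
  finitely_generated_subsets r setT -> compact_coherent_wH (alexandrov r).
Proof.
move=> r_refl r_trans fgT.
have compactA (A : set (alexandrov r)) : compact A.
  apply: finitely_generated_compact; have [G GA AG] := fgT A (subsetT A).
  by exists G => // x /AG[g gG gx]; exists g => //; exact/spec_le_alexandrov.
split; first exact: compactA.
split; first by move=> A B *; exact: compactA.
exact: alexandrov_weakly_hausdorff.
Qed.

Section ThreadLimit.
Variables (T : choiceType) (r : nat -> T -> T -> Prop) (p : nat -> nat -> T -> T).

Definition thread (z : forall n, alexandrov (r n)) : Prop :=
  forall m n, (m <= n)%N -> p m n (z n) = z m.

Definition threads : Type := {z : forall n, alexandrov (r n) | thread z}.
HB.instance Definition _ := gen_eqMixin threads.
HB.instance Definition _ := gen_choiceMixin threads.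

(* For monotone bonding maps the sets of threads above z at level n shrink as
   n grows, so this is the initial topology of the projections. *)
Definition eventually_upper (A : set threads) : Prop :=
  forall z, A z -> \forall n \near \oo,
    forall w : threads, r n (sval z n) (sval w n) -> A w.

Lemma eventually_upperT : eventually_upper setT.
Proof. by move=> z _; apply: nearW. Qed.

Lemma eventually_upperI : setI_closed eventually_upper.
Proof.
move=> A B oA oB z [Az Bz]; apply: filterS (filterI (oA z Az) (oB z Bz)).
by move=> n [hA hB] w zw; split; [exact: hA | exact: hB].
Qed.

Lemma eventually_upper_bigcup (I : Type) (F : I -> set threads) :
  (forall i, eventually_upper (F i)) -> eventually_upper (\bigcup_i F i).
Proof.
move=> oF z [i _ Fz]; apply: filterS (oF i z Fz) => n h w zw.
by exists i => //; exact: h.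
Qed.

HB.instance Definition _ := isOpenTopological.Build threads
  eventually_upperT eventually_upperI eventually_upper_bigcup.

Lemma open_threads (A : set threads) : open A <-> eventually_upper A.
Proof. by []. Qed.

Definition proj_thread n (z : threads) : alexandrov (r n) := sval z n.

Hypotheses (r_refl : forall n x, r n x x)
  (r_trans : forall n x y z, r n x y -> r n y z -> r n x z)
  (p_mono : forall m n x y, (m <= n)%N -> r n x y -> r m (p m n x) (p m n y)).

Lemma thread_le_mono (z w : threads) m n : (m <= n)%N ->
  r n (sval z n) (sval w n) -> r m (sval z m) (sval w m).
Proof. by move=> mn /(p_mono mn); rewrite (svalP z m n mn) (svalP w m n mn). Qed.

Lemma continuous_proj_thread n : continuous (proj_thread n).
Proof.
apply/continuousP => A /open_alexandrov oA; apply/open_threads => z Az.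
apply: filterS (nbhs_infty_ge n) => k nk w zw.
exact: oA _ _ (thread_le_mono nk zw) Az.
Qed.

Lemma spec_le_threads (z w : threads) n :
  spec_le z w -> r n (sval z n) (sval w n).
Proof.
move=> /(_ (proj_thread n @^-1` r n (sval z n))); apply; last exact: r_refl.
have /continuousP := @continuous_proj_thread n; apply.
exact: (open_up (@r_trans n)).
Qed.

Lemma threads_proj_limit :
  is_proj_limit (X := fun n => alexandrov (r n)) (fun m n => (m <= n)%N) p
    proj_thread.
Proof.
split.
  by split=> [n|m n mn z]; [exact: continuous_proj_thread | exact: (svalP z)].
move=> M s [s_cont s_comp].
have s_is_thread x : thread (s ^~ x) by move=> m n mn; exact: s_comp.
exists (fun x => exist _ _ (s_is_thread x)); split => //.
- apply/continuousP => A /open_threads oA; rewrite openE => x Ax.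
  have [n An] := filter_ex (oA _ Ax).
  have up_open : open (s n @^-1` r n (s n x)).
    by have /continuousP := s_cont n; apply; exact: (open_up (@r_trans n)).
  apply: filterS (open_nbhs_nbhs (conj up_open (r_refl n _))).
  by move=> y xy; apply: An.
- move=> u _ us x; apply: eq_sig_hprop => [?|]; first exact: Prop_irrelevance.
  by apply: funext => n; exact: us.
Qed.

End ThreadLimit.

Inductive point := Bot | Aa | Bb of nat | Ss of nat.
HB.instance Definition _ := gen_eqMixin point.
HB.instance Definition _ := gen_choiceMixin point.

Definition lev (n : nat) (c d : point) : Prop :=
  match c, d with
  | Bot, _ => True
  | Aa, Aa | Aa, Ss _ => True
  | Bb i, Bb j => (i <= j)%N
  | Bb i, Ss k => (i <= n)%N /\ (i <= k)%N
  | Ss k, Ss l => (k <= l)%N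
  | _, _ => False
  end.

Lemma lev_refl n c : lev n c c.
Proof. by case: c => //= *; lia. Qed.

Lemma lev_trans n c d e : lev n c d -> lev n d e -> lev n c e.
Proof. by case: c; case: d; case: e => //= *; lia. Qed.

Lemma lev_finitely_generated n : finitely_generated_subsets (lev n) setT.
Proof.
have chain (f : nat -> point) : (forall i j, (i <= j)%N -> lev n (f i) (f j)) ->
    finitely_generated_subsets (lev n) (range f).
  exact: finitely_generated_subsets_chain.
have -> : [set: point] = range (fun _ : nat => Bot) `|` range (fun _ : nat => Aa)
    `|` range Bb `|` range Ss.
  apply/seteqP; split=> [x _|//]; case: x => [| |j|k].
  - by do 3 left; exists 0%N.
  - by do 2 left; right; exists 0%N.
  - by left; right; exists j.
  - by right; exists k.
by repeat apply: finitely_generated_subsetsU; apply: chain => i j ij //=.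
Qed.

Lemma level_compact_coherent_wH n : compact_coherent_wH (alexandrov (lev n)).
Proof.
exact: alexandrov_compact_coherent_wH (@lev_refl n) (@lev_trans n)
  (lev_finitely_generated n).
Qed.

Definition proj (m n : nat) (c : point) : point :=
  if c is Bb j then
    Bb (if (j <= m)%N then j else if (j <= n)%N then m else j - (n - m))
  else c.

Definition emb (m n : nat) (c : point) : point :=
  if c is Bb j then Bb (if (j <= m)%N then j else j + (n - m)) else c.

Lemma proj_id m c : proj m m c = c.
Proof. by case: c => //= j; congr Bb; repeat case: ifP; move=> *; lia. Qed.

Lemma proj_comp m n k c :
  (m <= n)%N -> (n <= k)%N -> proj m n (proj n k c) = proj m k c.
Proof.
by move=> mn nk; case: c => //= j; congr Bb; repeat case: ifP; move=> *; lia.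
Qed.

Lemma proj_mono m n c d :
  (m <= n)%N -> lev n c d -> lev m (proj m n c) (proj m n d).
Proof.
by move=> mn; case: c; case: d => //= *; repeat case: ifP; move=> *; lia.
Qed.

Lemma emb_mono m n c d :
  (m <= n)%N -> lev m c d -> lev n (emb m n c) (emb m n d).
Proof.
by move=> mn; case: c; case: d => //= *; repeat case: ifP; move=> *; lia.
Qed.

Lemma proj_emb m n c : (m <= n)%N -> proj m n (emb m n c) = c.
Proof.
by move=> mn; case: c => //= j; congr Bb; repeat case: ifP; move=> *; lia.
Qed.

Lemma emb_proj m n c : (m <= n)%N -> lev n (emb m n (proj m n c)) c.
Proof. by move=> mn; case: c => //= j; repeat case: ifP; move=> *; lia. Qed.

Lemma leq_directed : directed_preorder (fun m n : nat => (m <= n)%N).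
Proof.
split=> [//|m n k|| m n]; [exact: leq_trans | by exists 0%N |].
by exists (maxn m n); rewrite leq_maxl leq_maxr.
Qed.

Lemma leq_countable_cofinal : countable_cofinal (fun m n : nat => (m <= n)%N).
Proof. by exists setT; split=> [|n]; [exact: countableP | exists n]. Qed.

Lemma proj_ep_system :
  is_ep_system (X := fun n => alexandrov (lev n)) (fun m n => (m <= n)%N) proj.
Proof.
have proj_cont m n : (m <= n)%N ->
    continuous (proj m n : alexandrov (lev n) -> alexandrov (lev m)).
  by move=> mn; apply: monotone_continuous => c d; exact: proj_mono.
split.
  split=> [||i c|i j k ij jk c]; first exact: leq_directed.
  - exact: proj_cont.
  - exact: proj_id.
  - exact: proj_comp.
move=> m n mn; split; first exact: proj_cont.
exists (emb m n); split.
- by apply: monotone_continuous => c d; exact: emb_mono.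
- by move=> c; exact: proj_emb.
- move=> c; apply/spec_le_alexandrov; last exact: emb_proj.
  + exact: lev_refl.
  + exact: lev_trans.
Qed.

Notation limit := (threads lev proj).

Definition a_thread : limit :=
  exist (@thread _ lev proj) (fun=> Aa) (fun _ _ _ => erefl).
Definition s_thread k : limit :=
  exist (@thread _ lev proj) (fun=> Ss k) (fun _ _ _ => erefl).

Lemma b_thread_subproof : @thread _ lev proj Bb.
Proof. by move=> m n mn /=; congr Bb; repeat case: ifP; move=> *; lia. Qed.

Definition b_thread : limit := exist (@thread _ lev proj) Bb b_thread_subproof.

Lemma spec_le_limit (z w : limit) n : spec_le z w -> lev n (sval z n) (sval w n).
Proof. exact: (spec_le_threads lev_refl lev_trans proj_mono n). Qed.

Lemma upset_a_b_thread : upset a_thread `&` upset b_thread `<=` set0.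
Proof.
move=> z [/spec_le_limit az /spec_le_limit bz].
case E0: (sval z 0%N) (az 0%N) (bz 0%N) => [| |j|k] //= _ _.
have := svalP z 0%N k.+1 (leq0n _); rewrite E0.
by case: (sval z k.+1) (bz k.+1) => //= l [_ ?] [?]; lia.
Qed.

Lemma limit_not_weakly_hausdorff : ~ weakly_hausdorff limit.
Proof.
move=> /(_ a_thread b_thread set0 open0 upset_a_b_thread)[U [V [oU Ua oV Vb UV]]].
have [n [Un Vn]] := filter_ex (filterI (oU _ Ua) (oV _ Vb)).
by apply: (UV (s_thread n)); split; [apply: Un | apply: Vn] => /=.
Qed.

Theorem corollary5p7 :
  ~ omega_projective coherent_wH /\
  ~ omega_projective compact_coherent_wH /\
  exists (X : nat -> topologicalType) (p : forall m n : nat, X n -> X m),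
    is_ep_system (fun m n : nat => (m <= n)%N) p /\
    (forall n, compact_coherent_wH (X n)) /\
    exists (L : topologicalType) (q : forall n, L -> X n),
      is_proj_limit (fun m n : nat => (m <= n)%N) p q /\ ~ weakly_hausdorff L.
Proof.
have [sys _] := proj_ep_system.
have lim := threads_proj_limit lev_refl lev_trans proj_mono.
split; [|split].
- move=> /(_ _ _ _ _ sys leq_countable_cofinal) omega.
  have [_] := omega (fun n => (level_compact_coherent_wH n).2) _ _ lim.
  exact: limit_not_weakly_hausdorff.
- move=> /(_ _ _ _ _ sys leq_countable_cofinal level_compact_coherent_wH _ _ lim).
  by case=> _ [_]; exact: limit_not_weakly_hausdorff.
- exists (fun n => alexandrov (lev n)), proj; split; first exact: proj_ep_system.
  split; first exact: level_compact_coherent_wH.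
  exists limit, (@proj_thread _ lev proj); split; first exact: lim.
  exact: limit_not_weakly_hausdorff.
Qed.
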